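(* Assume $m=2$, i.e. $\Theta=\{\theta_1,\theta_2\}$, and let $\varphi\in\Delta_1^2$. If there exists $f\in\mathcal{W}^\varphi$ with $f\in\mathcal{F}_{\mathrm{inf}}$, then for every $\widehat f\in\mathcal{W}^\varphi$, $\varphi$ is the unique $\psi\in\Delta_1^2$ satisfying $$\sum_{s=1}^2\big(C^{\theta_s}_p(\widehat f)-C^{\theta_s}_r(\widehat f)\big)\psi_s=0\ \text{ for all } p,r \text{ with } \widehat f_p,\widehat f_r>0,$$ $$\sum_{s=1}^2\big(C^{\theta_s}_p(\widehat f)-C^{\theta_s}_r(\widehat f)\big)\psi_s\le0\ \text{ for all } p,r \text{ with } \widehat f_p>0,\ \widehat f_r=0.$$
   Context: Let $\mathcal{G}=(\mathcal{V},\mathcal{E})$ be a finite directed graph with an origin $v_o$ and a destination $v_d$, and let $\mathcal{P}$ be the (finite) set of acyclic directed paths from $v_o$ to $v_d$, $n=|\mathcal{P}|$. The set of feasible path-flows is $\mathcal{H}=\{f\in\mathbb{R}^n_{\ge0}:\sum_{p\in\mathcal{P}}f_p=1\}$. For a path-flow $f$, the flow on edge $e_k$ is $f_{e_k}=\sum_{p\ni e_k}f_p$. There is a finite set of states $\Theta=\{\theta_1,\dots,\theta_m\}$; in each state $\theta_s$ each edge $e_k$ has a known cost function $C^{\theta_s}_{e_k}:\mathbb{R}_{\ge0}\to\mathbb{R}_{\ge0}$ that is continuous and strictly increasing. The cost of path $p$ in state $\theta_s$ is $C^{\theta_s}_p(f)=\sum_{e_k\in p}C^{\theta_s}_{e_k}(f_{e_k})$.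 For $\varphi\in\Delta_1^m:=\{x\in\mathbb{R}^m_{\ge0}:\sum_i x_i=1\}$ the expected cost of path $p$ is $C^\varphi_p(f)=\sum_{s}\varphi_sC^{\theta_s}_p(f)$. A flow $f\in\mathcal{H}$ is a $\varphi$-based Wardrop equilibrium ($\varphi$-WE) if for all $p$ with $f_p>0$ we have $C^\varphi_p(f)\le C^\varphi_r(f)$ for all $r\in\mathcal{P}$; $\mathcal{W}^\varphi$ denotes the set of $\varphi$-WE. For each $s$, $\varphi^{\theta_s}\in\Delta_1^m$ is the distribution with $\varphi^{\theta_s}_s=1$, and $\mathcal{W}^{\theta_s}:=\mathcal{W}^{\varphi^{\theta_s}}$. For $\varphi\in\Delta_1^m$, $\mathcal{R}^{\mathrm{use}}_\varphi=\{p\in\mathcal{P}:\exists f\in\mathcal{W}^\varphi,\ f_p>0\}$. In the two-state case, the set of informative flows is $$\mathcal{F}_{\mathrm{inf}}=\{f\in\mathcal{H}: f\notin\mathcal{W}^{\theta_1}\cup\mathcal{W}^{\theta_2},\ f_p>0\ \text{for all } p\in\mathcal{R}^{\mathrm{use}}_{\varphi^{\theta_1}}\}.$$ *)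

From HB Require Import structures.
From mathcomp Require Import all_boot all_order all_algebra.
From mathcomp Require Import all_classical all_reals all_analysis.
Set Implicit Arguments. Unset Strict Implicit. Unset Printing Implicit Defensive.
Import Order.TTheory GRing.Theory Num.Theory.
Local Open Scope ring_scope.

Section Network.
Variables (V E : finType) (src dst : E -> V) (vo vd : V).

(* A directed path given as its sequence of edges e_1 ... e_k:
   src e_1 = vo, dst e_i = src e_(i+1), dst e_k = vd,
   acyclic: the visited vertices vo, dst e_1, ..., dst e_k are pairwise distinct.
   (If vo = vd, the only such path is the empty one.) *)
Definition is_odpath (s : seq E) : bool :=
  [&& map src s == belast vo (map dst s),
      last vo (map dst s) == vd &
      uniq (vo :: map dst s)].

Definition uniq_edge_seqs : seq (seq E) :=
  undup (flatten (map (fun A : {set E} => permutations (enum (mem A))) (enum {: {set E}}))).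

Definition odpaths : seq (seq E) := [seq s <- uniq_edge_seqs | is_odpath s].
Definition path_t : finType := seq_sub odpaths.

Variable R : realType.

Definition edge_flow (f : {ffun path_t -> R}) (e : E) : R :=
  \sum_(p : path_t | e \in ssval p) f p.

Definition path_cost (c : E -> R -> R) (f : {ffun path_t -> R}) (p : path_t) : R :=
  \sum_(e <- ssval p) c e (edge_flow f e).

Variable m : nat.
Variable C : 'I_m -> E -> R -> R.

Definition simplex (phi : {ffun 'I_m -> R}) : Prop :=
  (forall s, 0 <= phi s) /\ \sum_s phi s = 1.

Definition feasible (f : {ffun path_t -> R}) : Prop :=
  (forall p, 0 <= f p) /\ \sum_p f p = 1.

Definition exp_cost (phi : {ffun 'I_m -> R}) (f : {ffun path_t -> R}) (p : path_t) : R :=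
  \sum_s phi s * path_cost (C s) f p.

Definition WE (phi : {ffun 'I_m -> R}) (f : {ffun path_t -> R}) : Prop :=
  feasible f /\
  forall p, 0 < f p -> forall r, exp_cost phi f p <= exp_cost phi f r.

Definition delta (s : 'I_m) : {ffun 'I_m -> R} := [ffun s' => (s' == s)%:R].

Definition Ruse (phi : {ffun 'I_m -> R}) (p : path_t) : Prop :=
  exists f, WE phi f /\ 0 < f p.

End Network.

Definition Finf (V E : finType) (src dst : E -> V) (vo vd : V) (R : realType)
  (C : 'I_2 -> E -> R -> R) (f : {ffun path_t src dst vo vd -> R}) : Prop :=
  feasible f /\
  ~ WE C (delta R ord0) f /\ ~ WE C (delta R (@Ordinal 2 1 isT)) f /\
  (forall p, Ruse C (delta R ord0) p -> 0 < f p).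

Definition belief_cond (V E : finType) (src dst : E -> V) (vo vd : V) (R : realType)
  (m : nat) (C : 'I_m -> E -> R -> R) (fh : {ffun path_t src dst vo vd -> R})
  (psi : {ffun 'I_m -> R}) : Prop :=
  (forall p r, 0 < fh p -> 0 < fh r ->
     \sum_s (path_cost (C s) fh p - path_cost (C s) fh r) * psi s = 0) /\
  (forall p r, 0 < fh p -> fh r = 0 ->
     \sum_s (path_cost (C s) fh p - path_cost (C s) fh r) * psi s <= 0).

From HB Require Import structures.
From mathcomp Require Import all_boot all_order all_algebra.
From mathcomp Require Import all_classical all_reals all_analysis.
From mathcomp Require Import ring lra.
Import Order.TTheory GRing.Theory Num.Theory.
Import numFieldNormedType.Exports.
Local Open Scope ring_scope.
Local Open Scope classical_set_scope.

(* Both [f] and [fh] are phi-equilibria and the phi-averaged edge costs are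
   strictly increasing, so [f] and [fh] induce the same edge flows. A belief psi
   satisfying the conditions makes [fh] a psi-equilibrium, hence [f] as well.
   If psi <> phi, the equilibrium conditions of [f] under two independent
   beliefs on two states force each state cost to be constant on the support
   of [f]. A theta_1-equilibrium [h] exists (a minimiser of Beckmann's
   potential) and only uses paths of R^use, all used by [f]; comparing [h] and
   [f] through monotonicity of the theta_1-costs shows that [f] is itself a
   theta_1-equilibrium, contradicting informativeness. *)

Set Implicit Arguments.
Unset Strict Implicit.
Unset Printing Implicit Defensive.

Lemma ler_dist_max0 (R : realDomainType) (x y : R) :
  `|Num.max x 0 - Num.max y 0| <= `|x - y|.
Proof.
rewrite ler_norml; have := ler_norm (x - y); have := ler_norm (y - x).
rewrite distrC; case: (leP x 0) => hx; case: (leP y 0) => hy;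
  rewrite ?(maxEge, maxElt) ?hx ?hy /=;
  repeat match goal with |- context [if ?b then _ else _] => case: ifP => ? end;
  move=> ? ?; apply/andP; split; lra.
Qed.

Section IncreasingCost.
Variables (R : realType) (c : R -> R).
Hypothesis c_cont : {within `[0%R, +oo[, continuous c}.
Hypothesis c_incr : forall x y, 0 <= x -> x < y -> c x < c y.
Local Notation mu := (@lebesgue_measure R).

Definition primitive (y : R) : R := \int[mu]_(t in `[0%R, y]) c t.

Lemma cost_le x y : 0 <= x -> x <= y -> c x <= c y.
Proof. by move=> x0; rewrite le_eqVlt => /predU1P[->//|xy]; exact/ltW/c_incr. Qed.

Lemma cost_gap_gt0 x y : 0 <= x -> 0 <= y -> x != y ->
  0 < (c x - c y) * (x - y).
Proof.
move=> x0 y0; case: (ltgtP x y) => // xy _.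
- by have := c_incr x0 xy; nra.
- by have := c_incr y0 xy; nra.
Qed.

(* The radius is a point [d] near 0 so that finitely many such statements can be
   intersected with [filter_forall]. *)
Lemma cost_near (x eta : R) : 0 <= x -> 0 < eta -> \forall d \near (0 : R),
  forall y, 0 <= y -> `|x - y| <= `|d| -> `|c x - c y| < eta.
Proof.
move=> x0 eta0; move/subspace_continuousP: c_cont => /(_ x).
have x_dom : `[0%R, +oo[ x by rewrite /= in_itv /= x0.
move=> /(_ x_dom)/cvgrPdist_lt/(_ _ eta0); rewrite near_withinE.
move=> /nbhs_ballP[d d0 near_x]; apply/nbhs_ballP; exists d => // d'.
rewrite /ball /= sub0r normrN => d'd y y0 xy; apply: near_x.
- by rewrite /ball /=; exact: le_lt_trans xy d'd.
- by rewrite /= in_itv /= y0.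
Qed.

Lemma integrable_cost y : mu.-integrable `[0%R, y] (EFin \o c).
Proof.
apply: continuous_compact_integrable; first exact: segment_compact.
by apply: continuous_subspaceW c_cont => z /=; rewrite !in_itv /= => /andP[-> _].
Qed.

Lemma primitive_sandwich x y : 0 <= x -> x <= y ->
  (y - x) * c x <= primitive y - primitive x <= (y - x) * c y.
Proof.
move=> x0 xy; rewrite /primitive.
have := @Rintegral_itvB R c (BLeft 0) (BRight y) x (integrable_cost y).
rewrite !bnd_simp => -> //.
have sxy : `]x, y] `<=` `[0%R, y] by apply: subset_itvr; rewrite bnd_simp.
have int_c : mu.-integrable `]x, y] (EFin \o c) by exact: integrableS (integrable_cost y).
have int_cst k : mu.-integrable `]x, y] (EFin \o (fun=> k)).
  apply: integrableS (_ : mu.-integrable `[0%R, y] _) => //.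
  apply: continuous_compact_integrable; first exact: segment_compact.
  by apply: continuous_subspaceT => z; exact: cst_continuous.
have len_xy : fine (mu `]x, y]) = y - x.
  rewrite lebesgue_measure_itv /= lte_fin; case: ltP => //= yx.
  by rewrite (@le_anti _ _ y x) ?yx ?subrr.
apply/andP; split; rewrite mulrC -len_xy -Rintegral_cst //;
  apply: le_Rintegral => // z; rewrite /= in_itv /= => /andP[xz zy].
- exact/ltW/c_incr.
- exact: cost_le (le_trans x0 (ltW xz)) zy.
Qed.

Lemma primitive_le_secant x y : 0 <= x -> 0 <= y ->
  primitive y - primitive x <= (y - x) * c y.
Proof.
move=> x0 y0; case: (leP x y) => [xy|/ltW yx].
  by case/andP: (primitive_sandwich x0 xy).
case/andP: (primitive_sandwich y0 yx) => + _.
by rewrite -lerN2 -mulNr !opprB.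
Qed.

Lemma primitive_lipschitz M x y : 0 <= x -> 0 <= y -> x <= M -> y <= M ->
  `|primitive y - primitive x| <= (`|c 0| + `|c M|) * `|y - x|.
Proof.
wlog xy : x y / x <= y.
  move=> W x0 y0 xM yM; case: (leP x y) => [|/ltW] yx; first exact: W.
  by rewrite distrC [`|y - x|]distrC W.
move=> x0 y0 xM yM; rewrite [`|y - x|]ger0_norm ?subr_ge0 //.
have c_bound z : 0 <= z -> z <= M -> - (`|c 0| + `|c M|) <= c z <= `|c 0| + `|c M|.
  move=> z0 zM; have := cost_le (lexx 0) z0; have := cost_le z0 zM.
  have := ler_norm (c M); have := ler_norm (- c 0); rewrite normrN.
  have := normr_ge0 (c 0); have := normr_ge0 (c M).
  move=> *; apply/andP; split; lra.
case/andP: (c_bound x x0 xM) => cx1 _; case/andP: (c_bound y y0 yM) => _ cy2.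
case/andP: (primitive_sandwich x0 xy) => lo hi.
rewrite ler_norml; apply/andP; split; nra.
Qed.

Lemma continuous_primitive_max0 : continuous (fun y : R => primitive (Num.max y 0)).
Proof.
move=> y0; apply/cvgrPdist_lt => eps eps0.
pose M := Num.max y0 0 + 1; pose K := `|c 0| + `|c M| + 1.
have K0 : 0 < K by rewrite ltr_pwDr // addr_ge0.
have r0 : 0 < Num.min 1 (eps / K) by rewrite lt_min ltr01 divr_gt0.
near=> y.
have : ball y0 (Num.min 1 (eps / K)) y by near: y; apply/nbhs_ballP; exists (Num.min 1 (eps / K)).
rewrite /ball /= lt_min => /andP[y0y1 y0yK].
have max_y0 : 0 <= Num.max y0 0 <= M by rewrite le_max lexx orbT /M lerDl ler01.
have max_y : 0 <= Num.max y 0 <= M.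
  have y0_max : y0 <= Num.max y0 0 by rewrite le_max lexx.
  have := ler_norm (y - y0); rewrite distrC in y0y1.
  rewrite le_max lexx orbT /= /M ge_max; case/andP: max_y0 => ? _.
  move=> ?; apply/andP; split; lra.
case/andP: max_y0 => a0 aM; case/andP: max_y => b0 bM.
apply: le_lt_trans (primitive_lipschitz b0 a0 bM aM) _.
have := le_lt_trans (ler_dist_max0 y0 y) y0yK.
rewrite ltr_pdivlMr // => dK; apply: le_lt_trans dK; rewrite mulrC.
by apply: ler_wpM2l; rewrite ?normr_ge0 // /K lerDl.
Unshelve. all: by end_near.
Qed.

End IncreasingCost.

Section Weights.
Variables (R : realDomainType) (I : finType) (w : I -> R).
Hypotheses (w_ge0 : forall i, 0 <= w i) (w_sum1 : \sum_i w i = 1).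

Lemma exists_weight_gt0 : exists i, 0 < w i.
Proof.
apply/not_existsP => none; have : \sum_i w i <= 0.
  by apply: sumr_le0 => i _; rewrite leNgt; apply/negP; exact: none.
by rewrite w_sum1 ler10.
Qed.

Lemma weighted_sum_const (a : I -> R) k :
  (forall i, 0 < w i -> a i = k) -> \sum_i w i * a i = k.
Proof.
move=> a_k; rewrite (eq_bigr (fun i => w i * k)) => [|i _].
  by rewrite -big_distrl /= w_sum1 mul1r.
have [/a_k -> //|wi0] := ltP 0 (w i).
by rewrite (@le_anti _ _ (w i) 0) ?wi0 ?w_ge0 // !mul0r.
Qed.

Lemma weighted_sum_ge0_eq0 (a : I -> R) : (forall i, 0 <= a i) ->
  \sum_i w i * a i = 0 -> forall i, 0 < w i -> a i = 0.
Proof.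
move=> a_ge0 /psumr_eq0P wa0 i wi0.
have /eqP := wa0 (fun i _ => mulr_ge0 (w_ge0 i) (a_ge0 i)) i isT.
by rewrite mulf_eq0 gt_eqF //= => /eqP.
Qed.

End Weights.

Lemma sumr_cross (R : comPzRingType) (I : finType) (u v a b : I -> R) :
  \sum_i (u i - v i) * (a i - b i) =
  (\sum_i u i * a i - \sum_i v i * a i) - (\sum_i u i * b i - \sum_i v i * b i).
Proof. by rewrite -!sumrB; apply: eq_bigr => i _; ring. Qed.

Lemma sumr_indicator (R : pzSemiRingType) (I : finType) (Q : pred I) (j : I) :
  \sum_(i | Q i) (i == j)%:R = (Q j)%:R :> R.
Proof.
rewrite big_mkcond (bigD1 j) //= big1 => [|i /negPf ->]; last by case: (Q i).
by rewrite eqxx addr0; case: (Q j).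
Qed.

Section SingleCost.
Variables (V E : finType) (src dst : E -> V) (vo vd : V) (R : realType).
Local Notation P := (path_t src dst vo vd).
Implicit Types (f g h : {ffun P -> R}) (c : E -> R -> R).

Definition wardrop c f :=
  feasible f /\ forall p, 0 < f p -> forall r, path_cost c f p <= path_cost c f r.

Lemma uniq_path_edges (p : P) : uniq (ssval p).
Proof.
have := ssvalP p; rewrite mem_filter => /andP[_].
rewrite mem_undup => /flattenP[s /mapP[A _ ->]].
by rewrite mem_permutations => /perm_uniq ->; exact: enum_uniq.
Qed.

Lemma path_costE c f p :
  path_cost c f p = \sum_e (e \in ssval p)%:R * c e (edge_flow f e).
Proof.
rewrite /path_cost big_uniq ?uniq_path_edges //= big_mkcond /=.
by apply: eq_bigr => e _; case: (e \in ssval p); rewrite ?mul1r ?mul0r.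
Qed.

Lemma sum_paths_by_edges (w : P -> R) (a : E -> R) :
  \sum_p w p * (\sum_e (e \in ssval p)%:R * a e) =
  \sum_e a e * \sum_(p : P | e \in ssval p) w p.
Proof.
under eq_bigr do rewrite big_distrr /=.
rewrite exchange_big /=; apply: eq_bigr => e _.
rewrite big_distrr /= [in RHS]big_mkcond /=; apply: eq_bigr => p _.
by case: (e \in ssval p); rewrite ?mul1r ?mul0r ?mulr0 // mulrC.
Qed.

Lemma total_costE c f :
  \sum_p f p * path_cost c f p = \sum_e c e (edge_flow f e) * edge_flow f e.
Proof. by under eq_bigr do rewrite path_costE; rewrite sum_paths_by_edges. Qed.

Lemma edge_flow_ge0 f : feasible f -> forall e, 0 <= edge_flow f e.
Proof. by move=> [f_ge0 _] e; exact: sumr_ge0. Qed.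

Lemma path_cost_eq c f g :
  edge_flow f =1 edge_flow g -> path_cost c f =1 path_cost c g.
Proof. by move=> fg p; apply: eq_bigr => e _; rewrite fg. Qed.

Lemma wardrop_variational c f g : wardrop c f -> feasible g ->
  \sum_p f p * path_cost c f p <= \sum_p g p * path_cost c f p.
Proof.
move=> [[f_ge0 f_sum1] f_eq] [g_ge0 g_sum1].
have [p0 fp0] := exists_weight_gt0 f_sum1.
rewrite (weighted_sum_const f_ge0 f_sum1 (k := path_cost c f p0)); last first.
  by move=> p fp; apply/le_anti; rewrite !f_eq.
rewrite -[leLHS]mul1r -g_sum1 big_distrl /=.
by apply: ler_sum => p _; apply: ler_wpM2l => //; exact: f_eq.
Qed.

Lemma wardrop_of_edge_flow_eq c h f : wardrop c h -> feasible f ->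
  edge_flow f =1 edge_flow h -> wardrop c f.
Proof.
move=> [Fh h_eq] Ff fh; have [p0 hp0] := exists_weight_gt0 Fh.2.
have cost := path_cost_eq c fh.
have above r : 0 <= path_cost c f r - path_cost c h p0.
  by rewrite subr_ge0 cost; exact: h_eq hp0 r.
have total : \sum_r f r * path_cost c f r = \sum_r h r * path_cost c h r.
  by rewrite !total_costE; apply: eq_bigr => e _; rewrite fh.
have gap : \sum_r f r * (path_cost c f r - path_cost c h p0) = 0.
  under eq_bigr do rewrite mulrBr.
  rewrite sumrB -big_distrl /= Ff.2 mul1r total (weighted_sum_const Fh.1 Fh.2
    (k := path_cost c h p0)) ?subrr // => q hq.
  by apply/le_anti; rewrite !h_eq.
split=> // q fq r; have /eqP := weighted_sum_ge0_eq0 Ff.1 above gap fq.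
by rewrite subr_eq0 => /eqP ->; rewrite cost; exact: h_eq hp0 r.
Qed.

Section Monotone.
Variable c : E -> R -> R.
Hypothesis c_incr : forall e x y, 0 <= x -> x < y -> c e x < c e y.

Lemma edge_flow_eq_of_variational f g : feasible f -> feasible g ->
  \sum_p f p * path_cost c f p <= \sum_p g p * path_cost c f p ->
  \sum_p g p * path_cost c g p <= \sum_p f p * path_cost c g p ->
  edge_flow f =1 edge_flow g.
Proof.
move=> Ff Fg var_f var_g.
pose gap e := (c e (edge_flow f e) - c e (edge_flow g e)) * (edge_flow f e - edge_flow g e).
have gap_sum : \sum_p (f p - g p) * (path_cost c f p - path_cost c g p) = \sum_e gap e.
  have := sum_paths_by_edges (fun p => f p - g p)
    (fun e => c e (edge_flow f e) - c e (edge_flow g e)).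
  rewrite /gap /edge_flow; under [in RHS]eq_bigr do rewrite sumrB.
  move=> <-; apply: eq_bigr => p _; rewrite !path_costE -sumrB; congr (_ * _).
  by apply: eq_bigr => e _; rewrite mulrBr.
have gap_gt0 e : edge_flow f e != edge_flow g e -> 0 < gap e.
  exact: (cost_gap_gt0 (c_incr e) (edge_flow_ge0 Ff e) (edge_flow_ge0 Fg e)).
have gap_ge0 e : 0 <= gap e.
  have [eq_e|/gap_gt0/ltW//] := eqVneq (edge_flow f e) (edge_flow g e).
  by rewrite /gap eq_e !subrr mulr0.
move=> e; apply/eqP/negPn/negP => /gap_gt0.
have : gap e <= \sum_e' gap e' by rewrite (bigD1 e) //= lerDl sumr_ge0.
rewrite -gap_sum sumr_cross; lra.
Qed.

Lemma wardrop_edge_flow_eq f g : wardrop c f -> wardrop c g ->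
  edge_flow f =1 edge_flow g.
Proof.
move=> WEf WEg; apply: edge_flow_eq_of_variational WEf.1 WEg.1 _ _.
- exact: wardrop_variational WEf WEg.1.
- exact: wardrop_variational WEg WEf.1.
Qed.

Lemma wardrop_of_support h f : wardrop c h -> feasible f ->
  (forall q, 0 < h q -> 0 < f q) ->
  (forall q r, 0 < f q -> 0 < f r -> path_cost c f q = path_cost c f r) ->
  wardrop c f.
Proof.
move=> WEh Ff h_f f_const; have Fh := WEh.1.
have [q0 hq0] := exists_weight_gt0 Fh.2.
have level g : feasible g -> (forall q, 0 < g q -> 0 < f q) ->
    \sum_q g q * path_cost c f q = path_cost c f q0.
  move=> Fg g_f; apply: (weighted_sum_const Fg.1 Fg.2) => q gq.
  exact: f_const (g_f q gq) (h_f q0 hq0).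
have var_f : \sum_q f q * path_cost c f q <= \sum_q h q * path_cost c f q.
  by rewrite !level.
have flows := edge_flow_eq_of_variational Fh Ff (wardrop_variational WEh Ff) var_f.
by apply: wardrop_of_edge_flow_eq WEh Ff _ => e; rewrite flows.
Qed.

End Monotone.

End SingleCost.

Section WardropExistence.
Variables (V E : finType) (src dst : E -> V) (vo vd : V) (R : realType).
Local Notation P := (path_t src dst vo vd).
Implicit Types f g h : {ffun P -> R}.
Variable c : E -> R -> R.
Hypothesis c_cont : forall e, {within `[0%R, +oo[, continuous (c e)}.
Hypothesis c_incr : forall e x y, 0 <= x -> x < y -> c e x < c e y.

(* The clamp at 0 is inactive on feasible flows and makes the potential
   continuous on all real path vectors. *)
Definition beckmann f := \sum_e primitive (c e) (Num.max (edge_flow f e) 0).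

Lemma beckmann_sub_le h g : feasible h -> feasible g ->
  beckmann g - beckmann h <=
  \sum_e (edge_flow g e - edge_flow h e) * c e (edge_flow g e).
Proof.
move=> Fh Fg; rewrite -sumrB; apply: ler_sum => e _.
have h0 := edge_flow_ge0 Fh e; have g0 := edge_flow_ge0 Fg e.
by rewrite (max_l h0) (max_l g0); exact: (primitive_le_secant (@c_cont e) (c_incr e) h0 g0).
Qed.

Definition shift_flow h (eps : R) (r p : P) : {ffun P -> R} :=
  [ffun q => h q + eps * ((q == r)%:R - (q == p)%:R)].

Lemma feasible_shift_flow h eps r p : feasible h -> r != p ->
  0 <= eps -> eps <= h p -> feasible (shift_flow h eps r p).
Proof.
move=> [h_ge0 h_sum1] rp eps0 eps_p; split=> [q|].
  rewrite ffunE; have [->|qr] := eqVneq q r.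
    by rewrite (negPf rp) subr0 mulr1 addr_ge0.
  have [->|qp] := eqVneq q p; first by rewrite sub0r mulrN1 subr_ge0.
  by rewrite subr0 mulr0 addr0.
under eq_bigr do rewrite ffunE.
by rewrite big_split /= h_sum1 -big_distrr /= sumrB !sumr_indicator subrr mulr0 addr0.
Qed.

Lemma edge_flow_shift_flow h eps r p e :
  edge_flow (shift_flow h eps r p) e =
  edge_flow h e + eps * ((e \in ssval r)%:R - (e \in ssval p)%:R).
Proof.
rewrite /edge_flow; under eq_bigr do rewrite ffunE.
by rewrite big_split /= -big_distrr /= sumrB !sumr_indicator.
Qed.

Lemma path_cost_near h eta : feasible h -> 0 < eta ->
  exists2 rho, 0 < rho & forall g, feasible g ->
    (forall e, `|edge_flow h e - edge_flow g e| <= rho) ->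
    forall q, `|path_cost c g q - path_cost c h q| <= eta.
Proof.
move=> Fh eta0; pose eta' := eta / #|E|.+1%:R.
have eta'0 : 0 < eta' by rewrite divr_gt0.
have near0 : \forall d \near (0 : R), forall e y, 0 <= y ->
    `|edge_flow h e - y| <= `|d| -> `|c e (edge_flow h e) - c e y| < eta'.
  apply: (filter_forall (nbhs_filter (0 : R))) => e.
  exact: cost_near (@c_cont e) _ _ (edge_flow_ge0 Fh e) eta'0.
move/nbhs_ballP: near0 => [rho rho0 near_h]; exists (rho / 2); first by rewrite divr_gt0.
move=> g Fg close q; rewrite !path_costE -sumrB (le_trans (ler_norm_sum _ _ _)) //.
apply: (@le_trans _ _ (\sum_(e : E) eta')).
  apply: ler_sum => e _; rewrite -mulrBr normrM.
  case: (e \in ssval q); rewrite ?normr1 ?normr0 ?mul1r ?mul0r ?(ltW eta'0) //.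
  rewrite distrC; apply/ltW/(near_h (rho / 2)).
  - by rewrite /ball /= sub0r normrN gtr0_norm ?divr_gt0 // ltr_pdivrMr // ltr_pMr // ltr1n.
  - exact: edge_flow_ge0 Fg e.
  - by rewrite [`|rho / 2|]gtr0_norm ?divr_gt0 //; exact: close.
rewrite sumr_const -mulr_natl /eta' mulrA ler_pdivrMr // -addn1 natrD.
have := ler0n R #|E|; nra.
Qed.

Lemma wardrop_of_beckmann_min h : feasible h ->
  (forall g, feasible g -> beckmann h <= beckmann g) -> wardrop c h.
Proof.
move=> Fh h_min; split=> // p hp r; rewrite leNgt; apply/negP => cheaper.
have rp : r != p by apply: contraTneq cheaper => ->; rewrite ltxx.
pose gap := path_cost c h p - path_cost c h r.
have gap0 : 0 < gap by rewrite subr_gt0.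
have [rho rho0 near_h] := path_cost_near Fh (divr_gt0 gap0 (ltr0Sn R 2)).
pose eps := Num.min rho (h p).
have eps0 : 0 < eps by rewrite lt_min rho0 hp.
have eps_rho : eps <= rho by rewrite ge_min lexx.
have eps_p : eps <= h p by rewrite ge_min lexx orbT.
have Fg := feasible_shift_flow Fh rp (ltW eps0) eps_p.
pose g := shift_flow h eps r p.
have close e : `|edge_flow h e - edge_flow g e| <= rho.
  rewrite edge_flow_shift_flow opprD addrA subrr sub0r normrN normrM gtr0_norm //.
  rewrite -[rho]mulr1; apply: ler_pM; rewrite ?normr_ge0 ?(ltW eps0) //.
  by case: (e \in ssval r); case: (e \in ssval p);
    rewrite /= ?subrr ?subr0 ?sub0r ?normrN ?normr0 ?normr1.
have descent : beckmann g - beckmann h <= eps * (path_cost c g r - path_cost c g p).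
  suff <- : \sum_e (edge_flow g e - edge_flow h e) * c e (edge_flow g e) =
      eps * (path_cost c g r - path_cost c g p) by exact: beckmann_sub_le.
  rewrite !path_costE -sumrB big_distrr /=; apply: eq_bigr => e _.
  by rewrite edge_flow_shift_flow addrAC subrr add0r -mulrA mulrBl.
have := near_h g Fg close r; have := near_h g Fg close p; rewrite !ler_norml.
move=> /andP[cp _] /andP[_ cr].
have : path_cost c g r - path_cost c g p < 0 by rewrite /gap in cr cp gap0; lra.
rewrite -(pmulr_rlt0 _ eps0); have := h_min g Fg; lra.
Qed.

Local Notation n := #|P|.

Definition flow_of_row (v : 'rV[R]_n) : {ffun P -> R} :=
  [ffun p => v ord0 (enum_rank p)].
Definition row_of_flow g : 'rV[R]_n := \row_i g (enum_val i).

Lemma row_of_flowK : cancel row_of_flow flow_of_row.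
Proof. by move=> g; apply/ffunP => p; rewrite !ffunE mxE enum_rankK. Qed.

Lemma sum_enum_rank (F : 'I_n -> R) : \sum_i F i = \sum_(p : P) F (enum_rank p).
Proof.
rewrite (reindex (@enum_rank P)) //; apply: onW_bij.
exact: (Bijective (@enum_rankK P) (@enum_valK P)).
Qed.

Definition row_simplex : set 'rV[R]_n :=
  [set v | forall i, `[0%R, 1%R] (v ord0 i)] `&` [set v | \sum_i v ord0 i = 1].

Lemma feasible_flow_of_row v : row_simplex v -> feasible (flow_of_row v).
Proof.
move=> [v01 v_sum1]; split=> [p|].
  by rewrite ffunE; have := v01 (enum_rank p); rewrite /= in_itv /= => /andP[].
by rewrite -v_sum1 sum_enum_rank; apply: eq_bigr => p _; rewrite ffunE.
Qed.

Lemma row_simplex_row_of_flow g : feasible g -> row_simplex (row_of_flow g).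
Proof.
move=> [g_ge0 g_sum1]; split=> [i|] /=.
  rewrite mxE in_itv /= g_ge0 -g_sum1 (bigD1 (enum_val i)) //= lerDl.
  exact: sumr_ge0.
by rewrite sum_enum_rank -[RHS]g_sum1; apply: eq_bigr => p _; rewrite mxE enum_rankK.
Qed.

Lemma compact_row_simplex : compact row_simplex.
Proof.
apply: compact_closedI.
  by have := @rV_compact R n (fun=> `[0%R, 1%R]) (fun=> @segment_compact R 0 1).
apply: (@preimage_closed _ _ (fun v : 'rV[R]_n => \sum_i v ord0 i) [set x | x = 1]).
  move=> v _; apply: continuous_big; first exact: add_continuous.
  by move=> i _; exact: coord_continuous.
exact: closed_eq.
Qed.

Lemma continuous_beckmann_row : continuous (fun v => beckmann (flow_of_row v)).
Proof.
have -> : (fun v => beckmann (flow_of_row v)) = fun v => \sum_e primitive (c e)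
    (Num.max (\sum_(p : P | e \in ssval p) v ord0 (enum_rank p)) 0).
  apply/funext => v; apply: eq_bigr => e _; congr (primitive _ (Num.max _ 0)).
  by apply: eq_bigr => p _; rewrite ffunE.
apply: continuous_big; first exact: add_continuous.
move=> e _ v; apply: (continuous_comp (f := fun v : 'rV[R]_n =>
  \sum_(p : P | e \in ssval p) v ord0 (enum_rank p))
  (g := fun y => primitive (c e) (Num.max y 0))).
  apply: continuous_big; first exact: add_continuous.
  by move=> p _; exact: coord_continuous.
exact: (continuous_primitive_max0 (@c_cont e) (c_incr e)).
Qed.

Lemma exists_wardrop f0 : feasible f0 -> exists h, wardrop c h.
Proof.
move=> /row_simplex_row_of_flow simplex_ne.
have [v /[!inE] v_simplex v_min] := compact_EVT_min (ex_intro _ _ simplex_ne)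
  compact_row_simplex (continuous_subspaceT continuous_beckmann_row).
exists (flow_of_row v); apply: wardrop_of_beckmann_min => [|g Fg].
  exact: feasible_flow_of_row.
by rewrite -(row_of_flowK g); apply: v_min; rewrite inE; exact: row_simplex_row_of_flow.
Qed.

End WardropExistence.

Section MixedCost.
Variables (V E : finType) (src dst : E -> V) (vo vd : V) (R : realType) (m : nat).
Local Notation P := (path_t src dst vo vd).
Variable C : 'I_m -> E -> R -> R.
Implicit Types (f : {ffun P -> R}) (w : {ffun 'I_m -> R}).

Definition mixed_cost w : E -> R -> R := fun e x => \sum_s w s * C s e x.

Lemma exp_costE w f p : exp_cost C w f p = path_cost (mixed_cost w) f p.
Proof.
rewrite /exp_cost /path_cost; under eq_bigr do rewrite big_distrr /=.
by rewrite exchange_big.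
Qed.

Lemma WE_wardrop w f : WE C w f <-> wardrop (mixed_cost w) f.
Proof.
by split=> -[Ff f_eq]; split=> // p fp r; move: (f_eq p fp r); rewrite !exp_costE.
Qed.

Lemma exp_cost_delta s f p : exp_cost C (delta R s) f p = path_cost (C s) f p.
Proof.
rewrite /exp_cost (bigD1 s) //= big1 => [|s' /negPf s's].
  by rewrite ffunE eqxx mul1r addr0.
by rewrite ffunE s's mul0r.
Qed.

Lemma WE_delta s f : WE C (delta R s) f <-> wardrop (C s) f.
Proof.
by split=> -[Ff f_eq]; split=> // p fp r; move: (f_eq p fp r); rewrite !exp_cost_delta.
Qed.

Lemma mixed_cost_incr w : simplex w ->
  (forall s e x y, 0 <= x -> x < y -> C s e x < C s e y) ->
  forall e x y, 0 <= x -> x < y -> mixed_cost w e x < mixed_cost w e y.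
Proof.
move=> [w_ge0 w_sum1] C_incr e x y x0 xy; rewrite -subr_gt0 -sumrB.
have [s ws] := exists_weight_gt0 w_sum1.
rewrite (bigD1 s) //=; apply: ltr_pwDl.
  by rewrite -mulrBr mulr_gt0 // subr_gt0 C_incr.
by apply: sumr_ge0 => s' _; rewrite -mulrBr mulr_ge0 // subr_ge0 ltW // C_incr.
Qed.

Lemma belief_sumE w f p r :
  \sum_s (path_cost (C s) f p - path_cost (C s) f r) * w s =
  exp_cost C w f p - exp_cost C w f r.
Proof. by rewrite /exp_cost -sumrB; apply: eq_bigr => s _; rewrite mulrC mulrBr. Qed.

Lemma WE_belief_condP w f : WE C w f <-> feasible f /\ belief_cond C f w.
Proof.
rewrite /belief_cond; split=> [[Ff f_eq]|[Ff [used unused]]].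
  split=> //; split=> p r fp fr; rewrite belief_sumE; last by rewrite subr_le0 f_eq.
  by apply/eqP; rewrite subr_eq0 eq_le !f_eq.
split=> // p fp r; have [fr|fr] := ltP 0 (f r).
  by have := used p r fp fr; rewrite belief_sumE => /eqP; rewrite subr_eq0 => /eqP ->.
have fr0 : f r = 0 by apply/le_anti; rewrite fr Ff.1.
by have := unused p r fp fr0; rewrite belief_sumE subr_le0.
Qed.

End MixedCost.

Lemma simplex2_orth_eq0 (R : realType) (phi psi : {ffun 'I_2 -> R}) (d : 'I_2 -> R) :
  simplex phi -> simplex psi -> psi != phi ->
  \sum_s d s * psi s = 0 -> \sum_s d s * phi s = 0 -> forall s, d s = 0.
Proof.
move=> [_ phi1] [_ psi1] psi_phi d_psi d_phi.
rewrite !big_ord_recl !big_ord0 !addr0 in phi1 psi1 d_psi d_phi.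
set s1 := lift ord0 ord0 in phi1 psi1 d_psi d_phi.
have I2 s : (s == ord0) || (s == s1) by case: s => [[|[|k]] hk].
have psi_phi0 : psi ord0 != phi ord0.
  apply: contraNneq psi_phi => eq0; apply/eqP/ffunP => s.
  by case/orP: (I2 s) => /eqP ->; lra.
have d_eq : d ord0 = d s1.
  have : (d ord0 - d s1) * (psi ord0 - phi ord0) = 0.
    have psi_s1 : psi s1 = 1 - psi ord0 by lra.
    have phi_s1 : phi s1 = 1 - phi ord0 by lra.
    by rewrite psi_s1 in d_psi; rewrite phi_s1 in d_phi; nra.
  by move/eqP; rewrite mulf_eq0 !subr_eq0 (negPf psi_phi0) orbF => /eqP.
have d0 : d ord0 = 0 by rewrite -d_eq -mulrDr psi1 mulr1 in d_psi.
by move=> s; case/orP: (I2 s) => /eqP ->; rewrite -?d_eq.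
Qed.

Lemma WE2_support_state_costs (V E : finType) (src dst : E -> V) (vo vd : V)
  (R : realType) (C : 'I_2 -> E -> R -> R) (phi psi : {ffun 'I_2 -> R})
  (f : {ffun path_t src dst vo vd -> R}) :
  simplex phi -> simplex psi -> psi != phi -> WE C phi f -> WE C psi f ->
  forall s q r, 0 < f q -> 0 < f r -> path_cost (C s) f q = path_cost (C s) f r.
Proof.
move=> phi_simplex psi_simplex psi_phi WE_phi WE_psi s q r fq fr.
have balanced w : WE C w f -> \sum_s (path_cost (C s) f q - path_cost (C s) f r) * w s = 0.
  by case/WE_belief_condP => _ [used _]; exact: used.
apply/eqP; rewrite -subr_eq0; apply/eqP.
exact: (simplex2_orth_eq0 phi_simplex psi_simplex psi_phi (balanced _ WE_psi) (balanced _ WE_phi)).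
Qed.

Theorem lemma7 (V E : finType) (src dst : E -> V) (vo vd : V) (R : realType)
  (C : 'I_2 -> E -> R -> R)
  (HCcont : forall s e, {within `[0%R, +oo[, continuous (C s e)})
  (HCnonneg : forall s e x, (0 <= x)%R -> (0 <= C s e x)%R)
  (HCincr : forall s e x y, (0 <= x)%R -> (x < y)%R -> (C s e x < C s e y)%R)
  (phi : {ffun 'I_2 -> R}) (Hphi : simplex phi) :
  (exists f : {ffun path_t src dst vo vd -> R}, WE C phi f /\ Finf C f) ->
  forall fh : {ffun path_t src dst vo vd -> R}, WE C phi fh ->
    belief_cond C fh phi /\
    (forall psi : {ffun 'I_2 -> R}, simplex psi -> belief_cond C fh psi -> psi = phi).
Proof.
move=> [f [WE_f [_ [not_WE0 [_ Ruse0_f]]]]] fh WE_fh.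
split=> [|psi psi_simplex belief_psi]; first by case/WE_belief_condP: WE_fh.
case: (eqVneq psi phi) => // psi_phi; exfalso; have Ff := WE_f.1.
have /WE_wardrop WEm_f := WE_f; have /WE_wardrop WEm_fh := WE_fh.
have flows := wardrop_edge_flow_eq (mixed_cost_incr Hphi HCincr) WEm_f WEm_fh.
have WE_psi_f : WE C psi f.
  apply/WE_wardrop/(wardrop_of_edge_flow_eq _ Ff flows)/WE_wardrop.
  by apply/WE_belief_condP; split; first exact: WE_fh.1.
have [h WE0_h] := exists_wardrop (HCcont ord0) (HCincr ord0) Ff.
apply/not_WE0/WE_delta; apply: (wardrop_of_support (HCincr ord0) WE0_h Ff).
- by move=> q hq; apply: Ruse0_f; exists h; split=> //; exact/WE_delta.
- exact: WE2_support_state_costs Hphi psi_simplex psi_phi WE_f WE_psi_f ord0.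
Qed.
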